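(* Let $\bar u=(u_\beta)_{\beta<\alpha}$ be a densely non-increasing sequence of elements of a linear order $(U,<)$ whose range $\{u_\beta\mid\beta<\alpha\}$ is infinite. Then $\bar u$ can be uniquely factorized as a concatenation $\bar u=\bar v\bar w$ of sequences where the length $\gamma$ of $\bar v$ is a limit ordinal, $\bar v$ is not ultimately constant in $\gamma$, and the range of $\bar w$ is finite.
   Context: Sequences are indexed by countable ordinals; the concatenation $\bar v\bar w$ of $(v_\beta)_{\beta<\gamma}$ and $(w_\beta)_{\beta<\delta}$ is the sequence of length $\gamma+\delta$ equal to $v_\beta$ at $\beta<\gamma$ and to $w_{\beta'}$ at $\gamma+\beta'$. A sequence $(u_\beta)_{\beta<\alpha}$ is constant on $[\gamma,\gamma')$ if $u_\beta=u_\gamma$ for all $\gamma\le\beta<\gamma'$; it is densely non-increasing if for all $\gamma<\gamma'\le\alpha$, either it is constant on $[\gamma,\gamma')$ or there exist $\gamma\le\beta<\beta'<\gamma'$ with $u_\beta>u_{\beta'}$. For a limit ordinal $\gamma\le\alpha$, it is ultimately constant in $\gamma$ if there is $\gamma'<\gamma$ such that it is constant on $[\gamma',\gamma)$. The range of a sequence is the set of its values. *)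

From Stdlib Require Import List.
Import ListNotations.

(* A countable ordinal alpha is represented by a countable type W carrying a
   well-founded strict total order lt (W is the set of indices beta < alpha).
   A "position" gamma <= alpha is an element of option W:
   Some b denotes the ordinal b < alpha, None denotes alpha itself. *)

Definition strict_total_order {T : Type} (r : T -> T -> Prop) : Prop :=
  (forall x, ~ r x x) /\
  (forall x y z, r x y -> r y z -> r x z) /\
  (forall x y, r x y \/ x = y \/ r y x).

Definition countable (T : Type) : Prop :=
  exists f : T -> nat, forall x y, f x = f y -> x = y.

Section Seq.
Context {W U : Type} (lt : W -> W -> Prop) (ltU : U -> U -> Prop).

Definition le (x y : W) : Prop := lt x y \/ x = y.

Definition before (g : option W) (b : W) : Prop :=
  match g with None => True | Some g0 => lt b g0 end.

Definition const_on (u : W -> U) (g : W) (g' : option W) : Prop :=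
  forall b, le g b -> before g' b -> u b = u g.

Definition densely_nonincreasing (u : W -> U) : Prop :=
  forall (g : W) (g' : option W), before g' g ->
    const_on u g g' \/
    exists b b', le g b /\ lt b b' /\ before g' b' /\ ltU (u b') (u b).

Definition is_limit (g : option W) : Prop :=
  (exists b, before g b) /\
  (forall b, before g b -> exists b', lt b b' /\ before g b').

Definition ult_const (u : W -> U) (g : option W) : Prop :=
  exists g', before g g' /\ const_on u g' g.

Definition finite_set {T : Type} (P : T -> Prop) : Prop :=
  exists l : list T, forall x, P x -> In x l.

Definition range (u : W -> U) : U -> Prop := fun x => exists b, u b = x.

(* Factorization u = v w with |v| = g: v = (u_b)_{b<g} and w = (u_b)_{g<=b<alpha}
   (reindexed by b = g + b').  Range of the suffix w: *)
Definition suffix_range (u : W -> U) (g : option W) : U -> Prop :=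
  fun x => exists b, ~ before g b /\ u b = x.

Definition good_factorization (u : W -> U) (g : option W) : Prop :=
  is_limit g /\ ~ ult_const u g /\ finite_set (suffix_range u g).

End Seq.

(* Let g0 be the least position from which the suffix of u has finite range (alpha itself
   qualifies, the suffix being empty).  Cutting at g0 works: g0 > 0 because the range of u
   is infinite, and if g0 were a successor b + 1, or u were constant on some [c, g0), then
   the suffix from b (resp. c) would add a single value and still be finite.
   Conversely, any admissible cut g is such a least position.  Otherwise some a < g has a
   finite suffix, so u takes a least value u b on [a, g).  As u is not ultimately constant
   in g, it changes value for a first time at some c with b < c < g; since g is a limit,
   c + 1 < g, and dense non-increase on [b, c + 1) forces u c < u b, against minimality. *)
From Stdlib Require Import List Classical.

Lemma well_founded_minimal {T : Type} (r : T -> T -> Prop) :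
  well_founded r -> forall P : T -> Prop, (exists x, P x) ->
  exists m, P m /\ forall y, P y -> ~ r y m.
Proof.
  intros wf P [x Px]. apply NNPP; intros no_min.
  induction (wf x) as [x _ IH].
  apply no_min. exists x. split; [exact Px|].
  intros y Py ryx. exact (IH y ryx Py).
Qed.

Lemma finite_set_minimal {U : Type} (ltU : U -> U -> Prop) :
  strict_total_order ltU -> forall P : U -> Prop, finite_set P -> (exists x, P x) ->
  exists m, P m /\ forall y, P y -> ~ ltU y m.
Proof.
  intros [irr [trans total]] P [L HL]. revert P HL.
  induction L as [|a L IH]; intros P HL [x Px]; [destruct (HL x Px)|].
  destruct (classic (exists y, P y /\ y <> a)) as [other | only_a].
  - destruct (IH (fun y => P y /\ y <> a)) as [m [[Pm ma] Hm]]; [|exact other|].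
    { intros y [Py ya]. destruct (HL y Py); [congruence|assumption]. }
    destruct (classic (P a /\ ltU a m)) as [[Pa am] | not_am].
    + exists a. split; [exact Pa|]. intros y Py ya.
      destruct (classic (y = a)) as [-> | yna]; [exact (irr a ya)|].
      exact (Hm y (conj Py yna) (trans _ _ _ ya am)).
    + exists m. split; [exact Pm|]. intros y Py ym.
      destruct (classic (y = a)) as [-> | yna]; [tauto|].
      exact (Hm y (conj Py yna) ym).
  - assert (Hxa : forall y, P y -> y = a).
    { intros y Py. apply NNPP. intros yna. apply only_a. exists y. auto. }
    exists x. split; [exact Px|]. intros y Py yx.
    rewrite (Hxa y Py), (Hxa x Px) in yx. exact (irr a yx).
Qed.

Lemma finite_set_add {T : Type} (P Q : T -> Prop) (a : T) :
  finite_set P -> (forall x, Q x -> x = a \/ P x) -> finite_set Q.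
Proof.
  intros [L HL] HQ. exists (a :: L). intros x Qx.
  destruct (HQ x Qx); [left | right; apply HL]; auto.
Qed.

Section Factorization.
Context {W U : Type} (lt : W -> W -> Prop) (ltU : U -> U -> Prop) (u : W -> U).
Hypothesis lt_order : strict_total_order lt.
Hypothesis lt_wf : well_founded lt.

Definition finite_suffix (g : option W) : Prop := finite_set (suffix_range lt u g).

Definition least_finite_suffix (g : option W) : Prop :=
  finite_suffix g /\ forall b, before lt g b -> ~ finite_suffix (Some b).

Lemma before_lt g b c : lt b c -> before lt g c -> before lt g b.
Proof. destruct lt_order as [_ [trans _]]. destruct g; simpl; eauto. Qed.

Lemma le_lt_trans a b c : le lt a b -> lt b c -> lt a c.
Proof. destruct lt_order as [_ [trans _]]. intros [ab | ->]; eauto. Qed.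

Lemma finite_suffix_const c g :
  before lt g c -> const_on lt u c g -> finite_suffix g -> finite_suffix (Some c).
Proof.
  destruct lt_order as [_ [_ total]]. intros gc Hconst Hfin.
  apply (finite_set_add _ _ (u c) Hfin). intros x [p [not_pc <-]].
  destruct (total p c) as [pc | [-> | cp]]; [contradiction | auto |].
  destruct (classic (before lt g p)) as [gp | not_gp].
  - left. apply Hconst; [left|]; assumption.
  - right. exists p. auto.
Qed.

Lemma exists_least_finite_suffix : exists g, least_finite_suffix g.
Proof.
  destruct (classic (exists a, finite_suffix (Some a))) as [some_fin | no_fin].
  - destruct (well_founded_minimal lt lt_wf _ some_fin) as [a [Ha Hmin]].
    exists (Some a). split; [exact Ha|]. intros b ba Hb. exact (Hmin b Hb ba).
  - exists None. split.
    + exists nil. intros x [b [not_b _]]. exact (not_b I).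
    + intros b _ Hb. apply no_fin. eauto.
Qed.

Lemma least_finite_suffix_good g :
  ~ finite_set (range u) -> least_finite_suffix g -> good_factorization lt u g.
Proof.
  intros infinite [Hfin Hleast]. split; [split|split].
  - apply NNPP. intros empty. apply infinite. destruct Hfin as [L HL]. exists L.
    intros x [b <-]. apply HL. exists b. split; [|reflexivity]. intros gb. eauto.
  - intros b gb. apply NNPP. intros no_succ. apply (Hleast b gb).
    apply (finite_suffix_const b g gb); [|exact Hfin].
    intros p [bp | ->] gp; [|reflexivity]. exfalso. eauto.
  - intros [c [gc Hconst]].
    exact (Hleast c gc (finite_suffix_const c g gc Hconst Hfin)).
  - exact Hfin.
Qed.

Lemma first_change g b :
  ~ ult_const lt u g -> before lt g b ->
  exists c, lt b c /\ before lt g c /\ u c <> u b /\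
    forall q, le lt b q -> lt q c -> u q = u b.
Proof.
  intros not_const gb.
  assert (change : exists c, le lt b c /\ before lt g c /\ u c <> u b).
  { apply NNPP. intros no_change. apply not_const. exists b. split; [exact gb|].
    intros p bp gp. apply NNPP. intros upb. apply no_change. eauto. }
  destruct (well_founded_minimal lt lt_wf _ change) as [c [[bc [gc ucb]] Hmin]].
  exists c. split; [destruct bc as [bc | <-]; [exact bc | congruence]|].
  split; [exact gc|]. split; [exact ucb|].
  intros q bq qc. apply NNPP. intros uqb.
  exact (Hmin q (conj bq (conj (before_lt g q c qc gc) uqb)) qc).
Qed.

Lemma exists_successor c : (exists d, lt c d) ->
  exists s, lt c s /\ forall q, lt c q -> ~ lt q s.
Proof. apply well_founded_minimal, lt_wf. Qed.

Hypothesis ltU_order : strict_total_order ltU.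
Hypothesis u_dni : densely_nonincreasing lt ltU u.

Lemma first_change_decreases b c s :
  lt b c -> lt c s -> (forall q, lt c q -> ~ lt q s) ->
  (forall q, le lt b q -> lt q c -> u q = u b) -> u c <> u b -> ltU (u c) (u b).
Proof.
  destruct lt_order as [irr [trans total]]. destruct ltU_order as [irrU _].
  intros bc cs succ Hconst ucb.
  assert (Hval : forall q, le lt b q -> lt q s -> q <> c -> u q = u b).
  { intros q bq qs qnc. destruct (total q c) as [qc | [-> | cq]].
    - exact (Hconst q bq qc).
    - contradiction.
    - exfalso. exact (succ q cq qs). }
  destruct (u_dni b (Some s)) as [const | [p [p' [bp [pp' [p's drop]]]]]].
  - exact (trans _ _ _ bc cs).
  - exfalso. apply ucb. apply const; [left|]; assumption.
  - assert (pnc : p <> c) by (intros ->; exact (succ p' pp' p's)).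
    rewrite (Hval p bp (trans _ _ _ pp' p's) pnc) in drop.
    destruct (classic (p' = c)) as [-> | p'nc]; [exact drop|].
    assert (bp' : le lt b p') by (left; exact (le_lt_trans _ _ _ bp pp')).
    rewrite (Hval p' bp' p's p'nc) in drop. exfalso. exact (irrU _ drop).
Qed.

Lemma good_factorization_least g :
  good_factorization lt u g -> least_finite_suffix g.
Proof.
  intros [[_ Hlim] [not_const Hfin]]. split; [exact Hfin|].
  intros a ga Ha.
  destruct (finite_set_minimal ltU ltU_order
              (fun x => exists p, le lt a p /\ before lt g p /\ u p = x))
    as [m [[b [ab [gb <-]]] Hmin]].
  { apply (finite_set_add _ _ (u a) Ha). intros x [p [ap [gp <-]]]. right.
    exists p. split; [|reflexivity]. intros pa. destruct lt_order as [irr _].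
    exact (irr a (le_lt_trans _ _ _ ap pa)). }
  { exists (u a). exists a. split; [right|]; auto. }
  destruct (first_change g b not_const gb) as [c [bc [gc [ucb Hconst]]]].
  destruct (exists_successor c) as [s [cs succ]].
  { destruct (Hlim c gc) as [d [cd _]]. eauto. }
  apply (Hmin (u c)).
  - exists c. split; [left; exact (le_lt_trans _ _ _ ab bc)|]. auto.
  - exact (first_change_decreases b c s bc cs succ Hconst ucb).
Qed.

End Factorization.

Lemma least_finite_suffix_unique {W U : Type} (lt : W -> W -> Prop) (u : W -> U) g g' :
  strict_total_order lt -> least_finite_suffix lt u g -> least_finite_suffix lt u g' ->
  g = g'.
Proof.
  intros [_ [_ total]] [Hfin Hleast] [Hfin' Hleast'].
  destruct g as [a|], g' as [b|]; try reflexivity.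
  - destruct (total a b) as [ab | [-> | ba]]; [|reflexivity|]; exfalso.
    + exact (Hleast' a ab Hfin).
    + exact (Hleast b ba Hfin').
  - exact (False_ind _ (Hleast' a I Hfin)).
  - exact (False_ind _ (Hleast b I Hfin')).
Qed.

(* Countability of the index set is not needed. *)
Theorem mainTheorem14 (W U : Type) (lt : W -> W -> Prop) (ltU : U -> U -> Prop)
  (u : W -> U) :
  strict_total_order lt -> well_founded lt -> countable W ->
  strict_total_order ltU ->
  densely_nonincreasing lt ltU u ->
  ~ finite_set (range u) ->
  exists g : option W, good_factorization lt u g /\
    forall g' : option W, good_factorization lt u g' -> g' = g.
Proof.
  intros lt_order lt_wf _ ltU_order u_dni infinite.
  destruct (exists_least_finite_suffix lt u lt_wf) as [g Hg].
  exists g. split.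
  - exact (least_finite_suffix_good lt u lt_order g infinite Hg).
  - intros g' Hg'.
    apply (least_finite_suffix_unique lt u g' g lt_order); [|exact Hg].
    exact (good_factorization_least lt ltU u lt_order lt_wf ltU_order u_dni g' Hg').
Qed.
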